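(* For every $\lambda>\lambda^*$, $\partial_eF(\lambda,e(\lambda))>0$.
   Context: Standing setup. Let $\gamma>0$; let $a_1,\dots,a_p>0$ with weights $\omega_i>0$, $\sum_i\omega_i=1$, and $b_1,\dots,b_n>0$ with weights $\pi_j>0$, $\sum_j\pi_j=1$. Let $\mu$ be the limiting spectral distribution of $\mathbf{N}\mathbf{N}^T$ where $\mathbf{N}=\mathbf{A}^{1/2}\mathbf{G}\mathbf{B}^{1/2}$ is $k\times l$, $\mathbf{G}$ has iid mean-zero entries of variance $1/l$, $k/l\to\gamma$, and the spectral distributions of $\mathbf{A},\mathbf{B}$ converge to $\nu=\sum_i\omega_i\delta_{a_i}$ and $\underline{\nu}=\sum_j\pi_j\delta_{b_j}$. $\mu$ is a compactly supported probability measure on $[0,\infty)$; $\lambda^*>0$ is the right endpoint of its support, and $s(\lambda)=\int\frac{d\mu(t)}{t-\lambda}$ for $\lambda>\lambda^*$. Define $G(e)=\sum_{j=1}^n\frac{b_j\pi_j}{1+\gamma b_j e}$ and $F(\lambda,e)=e-\sum_{i=1}^p\frac{a_i\omega_i}{a_iG(e)-\lambda}$. It is known (master equations) that there is a smooth real function $e(\lambda)$ on $(\lambda^*,\infty)$, never equal to a pole $-1/(\gamma b_j)$ of $G$ and with $a_iG(e(\lambda))\ne\lambda$, satisfying $s(\lambda)=\sum_{i=1}^p\frac{\omega_i}{a_iG(e(\lambda))-\lambda}$ and $F(\lambda,e(\lambda))=0$. *)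

From Stdlib Require Import Reals Lra.
Open Scope R_scope.

Fixpoint rsum (n : nat) (f : nat -> R) : R :=
  match n with
  | O => 0
  | S k => rsum k f + f k
  end.

Definition Gfun (gamma : R) (n : nat) (b pi : nat -> R) (e : R) : R :=
  rsum n (fun j => b j * pi j / (1 + gamma * b j * e)).

Definition Ffun (gamma : R) (p : nat) (a om : nat -> R) (n : nat) (b pi : nat -> R)
  (lam e : R) : R :=
  e - rsum p (fun i => a i * om i / (a i * Gfun gamma n b pi e - lam)).

Definition cont_on (lo hi : R) (f : R -> R) : Prop :=
  forall t, lo <= t <= hi -> continuity_pt f t.

(* I is (the integration functional of) a probability measure on [lo,hi]:
   a positive, normalised linear functional on C([lo,hi]) depending only on
   values on [lo,hi] (Riesz representation). *)
Definition prob_functional (lo hi : R) (I : (R -> R) -> R) : Prop :=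
  (forall f g, (forall t, lo <= t <= hi -> f t = g t) -> I f = I g) /\
  (forall f g c, cont_on lo hi f -> cont_on lo hi g ->
      I (fun t => f t + c * g t) = I f + c * I g) /\
  (forall f, cont_on lo hi f -> (forall t, lo <= t <= hi -> 0 <= f t) -> 0 <= I f) /\
  I (fun _ => 1) = 1.

Definition in_support (lo hi : R) (I : (R -> R) -> R) (x : R) : Prop :=
  forall eps, 0 < eps ->
    exists f, cont_on lo hi f /\
      (forall t, lo <= t <= hi -> 0 <= f t) /\
      (forall t, lo <= t <= hi -> eps <= Rabs (t - x) -> f t = 0) /\
      0 < I f.

Definition stieltjes (I : (R -> R) -> R) (lam : R) : R :=
  I (fun t => / (t - lam)).

Definition smooth_on (lo : R) (e : R -> R) : Prop :=
  exists d : nat -> R -> R,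
    (forall x, lo < x -> d O x = e x) /\
    (forall k x, lo < x -> derivable_pt_lim (d k) x (d (S k) x)).

From Stdlib Require Import Reals Lra Lia.
From Coquelicot Require Import Coquelicot.
Open Scope R_scope.

(* Write E = e(lambda), R1 = sum_i a_i w_i / (a_i G(E) - lambda)^2 > 0 and
   R2 = sum_i a_i^2 w_i / (a_i G(E) - lambda)^2, so that
   d_e F(lambda, E) = 1 + G'(E) R2.
   1. Implicit differentiation of F(t, e(t)) = 0 at t = lambda gives
      e'(lambda) (1 + G'(E) R2) = R1.
   2. Combining the two master equations with mu(1) = sum_i w_i = 1 gives
      G(e(t)) e(t) = int s / (s - t) dmu(s) =: phi(t) for t > lambda*.  The
      derivative of the left side is e'(lambda) (G'(E) E + G(E)) and
      G'(E) E + G(E) = sum_j b_j pi_j / (1 + gamma b_j E)^2 > 0, while phi has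
      increments phi(lambda+h) - phi(lambda) >= h m(1) / (lambda+1)^2, where the
      first moment m(1) = int s dmu(s) is positive because lambda* > 0 lies in
      the support of mu.  Hence e'(lambda) > 0.
   Steps 1 and 2 together give d_e F(lambda, E) = R1 / e'(lambda) > 0.
   The file develops finite sums, derivatives of G and of the resolvent sums,
   facts about the probability functional, and then these two steps. *)

Lemma rsum_ext m f g : (forall k, (k < m)%nat -> f k = g k) -> rsum m f = rsum m g.
Proof.
  induction m as [|m IH]; simpl; intros H; [reflexivity|].
  rewrite IH by (intros; apply H; lia). rewrite H by lia; reflexivity.
Qed.

Lemma rsum_plus m f g : rsum m (fun k => f k + g k) = rsum m f + rsum m g.
Proof. induction m as [|m IH]; simpl; [lra | rewrite IH; lra]. Qed.

Lemma rsum_scal m c f : rsum m (fun k => c * f k) = c * rsum m f.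
Proof. induction m as [|m IH]; simpl; [ring | rewrite IH; ring]. Qed.

Lemma rsum_pos m f : (0 < m)%nat -> (forall k, (k < m)%nat -> 0 < f k) -> 0 < rsum m f.
Proof.
  induction m as [|m IH]; intros Hm Hf; [lia|]; simpl.
  assert (0 < f m) by (apply Hf; lia).
  destruct m as [|m]; [simpl; lra|].
  assert (0 < rsum (S m) f) by (apply IH; [lia | intros; apply Hf; lia]); lra.
Qed.

Lemma rsum_lin2 m c d f g :
  c * rsum m f - d * rsum m g = rsum m (fun k => c * f k - d * g k).
Proof. induction m as [|m IH]; simpl; [ring | rewrite <- IH; ring]. Qed.

Lemma rsum_one_nonempty m f : rsum m f = 1 -> (0 < m)%nat.
Proof. destruct m; simpl; [lra | lia]. Qed.

Lemma is_derive_eq (f : R -> R) x l l' : is_derive f x l -> l = l' -> is_derive f x l'.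
Proof. intros H ->; exact H. Qed.

Lemma rsum_derive m (f : nat -> R -> R) df x :
  (forall k, (k < m)%nat -> is_derive (f k) x (df k)) ->
  is_derive (fun y => rsum m (fun k => f k y)) x (rsum m df).
Proof.
  induction m as [|m IH]; simpl; intros H.
  - apply (@is_derive_const R_AbsRing R_NormedModule 0).
  - apply (is_derive_plus (fun y => rsum m (fun k => f k y)) (f m)); auto.
Qed.

Lemma is_derive_cdiv c (u : R -> R) x du : is_derive u x du -> u x <> 0 ->
  is_derive (fun y => c / u y) x (- c * du / (u x) ^ 2).
Proof.
  intros Hu Hux.
  eapply is_derive_eq.
  - apply (is_derive_div (fun _ => c) u x 0 du); auto.
    apply (@is_derive_const R_AbsRing R_NormedModule c).
  - simpl; field; exact Hux.
Qed.

Lemma is_derive_ext_gt lo (f g : R -> R) x d :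
  lo < x -> (forall t, lo < t -> f t = g t) -> is_derive f x d -> is_derive g x d.
Proof.
  intros Hx Hfg. apply is_derive_ext_loc.
  eapply filter_imp; [exact Hfg | apply open_gt; exact Hx].
Qed.

Lemma smooth_on_derivable lo e x : smooth_on lo e -> lo < x -> ex_derive e x.
Proof.
  intros [d [Hd0 Hd1]] Hx. exists (d 1%nat x).
  apply (is_derive_ext_gt lo (d 0%nat)); auto.
  apply is_derive_Reals, Hd1, Hx.
Qed.

Lemma derive_ge_of_increments (f : R -> R) x d m :
  is_derive f x d -> (forall h, 0 < h <= 1 -> h * m <= f (x + h) - f x) -> m <= d.
Proof.
  intros Hd Hinc. apply Rnot_lt_le; intros Hlt.
  apply is_derive_Reals in Hd.
  destruct (Hd (m - d)) as [[delta Hdelta] Hslope]; [lra|].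
  set (h := Rmin (delta / 2) 1).
  assert (Hh : 0 < h <= 1) by (split; [apply Rmin_pos; lra | apply Rmin_r]).
  assert (Hhd : h <= delta / 2) by apply Rmin_l.
  assert (Hq : m <= (f (x + h) - f x) / h).
  { apply (Rmult_le_reg_r h); [lra|].
    unfold Rdiv; rewrite Rmult_assoc, Rinv_l by lra.
    specialize (Hinc h Hh); lra. }
  assert (Habs : Rabs ((f (x + h) - f x) / h - d) < m - d).
  { apply Hslope; [lra | rewrite Rabs_right; simpl; lra]. }
  apply Rabs_def2 in Habs; lra.
Qed.

Lemma sq_pos x : x <> 0 -> 0 < x ^ 2.
Proof. intros H. simpl; rewrite Rmult_1_r; apply (Rsqr_pos_lt x H). Qed.

Definition Gd (gamma : R) (n : nat) (b pi : nat -> R) (x : R) : R :=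
  rsum n (fun j => - (b j * pi j) * (gamma * b j) / (1 + gamma * b j * x) ^ 2).

Lemma pole_free gamma bj x :
  0 < gamma -> 0 < bj -> x <> - / (gamma * bj) -> 1 + gamma * bj * x <> 0.
Proof.
  intros Hg Hb Hx Hz. apply Hx.
  replace x with ((1 + gamma * bj * x - 1) / (gamma * bj)) by (field; lra).
  rewrite Hz; field; lra.
Qed.

Section FunctionG.
Variables (gamma : R) (n : nat) (b pi : nat -> R) (x : R).
Hypothesis Hx : forall j, (j < n)%nat -> 1 + gamma * b j * x <> 0.

Lemma Gfun_derive : is_derive (Gfun gamma n b pi) x (Gd gamma n b pi x).
Proof.
  apply (rsum_derive n (fun j y => b j * pi j / (1 + gamma * b j * y))).
  intros j Hj. apply (is_derive_cdiv _ (fun y => 1 + gamma * b j * y)); auto.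
  auto_derive; auto; ring.
Qed.

(* (x G(x))' = sum_j b_j pi_j / (1 + gamma b_j x)^2 is positive. *)
Lemma Gd_mul_add_Gfun_pos :
  (0 < n)%nat -> (forall j, (j < n)%nat -> 0 < b j) -> (forall j, (j < n)%nat -> 0 < pi j) ->
  0 < Gd gamma n b pi x * x + Gfun gamma n b pi x.
Proof.
  intros Hn Hb Hpi.
  replace (Gd gamma n b pi x * x + Gfun gamma n b pi x)
    with (rsum n (fun j => b j * pi j / (1 + gamma * b j * x) ^ 2)).
  - apply rsum_pos; auto; intros j Hj.
    apply Rdiv_lt_0_compat; [apply Rmult_lt_0_compat; auto | apply sq_pos; auto].
  - unfold Gd, Gfun. rewrite Rmult_comm, <- rsum_scal, <- rsum_plus.
    apply rsum_ext; intros j Hj; field; auto.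
Qed.
End FunctionG.

Lemma Gfun_comp_mul_derive gamma n b pi (e : R -> R) t e1 :
  (forall j, (j < n)%nat -> 1 + gamma * b j * e t <> 0) -> is_derive e t e1 ->
  is_derive (fun u => Gfun gamma n b pi (e u) * e u) t
    (e1 * (Gd gamma n b pi (e t) * e t + Gfun gamma n b pi (e t))).
Proof.
  intros Hx He. eapply is_derive_eq.
  - apply (is_derive_mult (fun u => Gfun gamma n b pi (e u)) e); [| exact He | apply Rmult_comm].
    apply (is_derive_comp (Gfun gamma n b pi) e); [apply Gfun_derive, Hx | exact He].
  - unfold plus, mult, scal; simpl; unfold mult; simpl; ring.
Qed.

(* The sum R(x, lambda) = sum_i a_i w_i / (a_i x - lambda) occurring in F, so
   that F(lambda, e) = e - R(G(e), lambda), and the sums R1, R2 making up its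
   partial derivatives: d_lambda R = R1 and d_x R = - R2. *)

Definition resolvent (p : nat) (a om : nat -> R) (x lam : R) : R :=
  rsum p (fun i => a i * om i / (a i * x - lam)).

Definition resolvent1 (p : nat) (a om : nat -> R) (x lam : R) : R :=
  rsum p (fun i => a i * om i / (a i * x - lam) ^ 2).

Definition resolvent2 (p : nat) (a om : nat -> R) (x lam : R) : R :=
  rsum p (fun i => a i * a i * om i / (a i * x - lam) ^ 2).

Lemma resolvent_derive p a om (g l : R -> R) t dg dl :
  (forall i, (i < p)%nat -> a i * g t <> l t) -> is_derive g t dg -> is_derive l t dl ->
  is_derive (fun y => resolvent p a om (g y) (l y)) t
    (dl * resolvent1 p a om (g t) (l t) - dg * resolvent2 p a om (g t) (l t)).
Proof.
  intros Hden Hg Hl. eapply is_derive_eq.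
  - apply (rsum_derive p (fun i y => a i * om i / (a i * g y - l y))
      (fun i => - (a i * om i) * (a i * dg - dl) / (a i * g t - l t) ^ 2)).
    intros i Hi. apply (is_derive_cdiv _ (fun y => a i * g y - l y)).
    + eapply is_derive_eq.
      * apply (is_derive_minus (fun y => a i * g y) l); [apply is_derive_scal, Hg | exact Hl].
      * reflexivity.
    + specialize (Hden i Hi); lra.
  - unfold resolvent1, resolvent2. rewrite rsum_lin2. apply rsum_ext; intros i Hi.
    specialize (Hden i Hi). field; lra.
Qed.

Lemma resolvent1_pos p a om x lam :
  (0 < p)%nat -> (forall i, (i < p)%nat -> 0 < a i) -> (forall i, (i < p)%nat -> 0 < om i) ->
  (forall i, (i < p)%nat -> a i * x <> lam) -> 0 < resolvent1 p a om x lam.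
Proof.
  intros Hp Ha Hom Hden. apply rsum_pos; auto; intros i Hi.
  apply Rdiv_lt_0_compat; [apply Rmult_lt_0_compat; auto |].
  apply sq_pos; specialize (Hden i Hi); lra.
Qed.

Lemma Ffun_derive_e gamma p a om n b pi lam x :
  (forall j, (j < n)%nat -> 1 + gamma * b j * x <> 0) ->
  (forall i, (i < p)%nat -> a i * Gfun gamma n b pi x <> lam) ->
  derivable_pt_lim (fun y => Ffun gamma p a om n b pi lam y) x
    (1 + Gd gamma n b pi x * resolvent2 p a om (Gfun gamma n b pi x) lam).
Proof.
  intros Hpole Hden. apply is_derive_Reals.
  change (is_derive (fun y => y - resolvent p a om (Gfun gamma n b pi y) ((fun _ => lam) y)) x
    (1 + Gd gamma n b pi x * resolvent2 p a om (Gfun gamma n b pi x) lam)).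
  eapply is_derive_eq.
  - apply (is_derive_minus (fun y => y)
      (fun y => resolvent p a om (Gfun gamma n b pi y) ((fun _ => lam) y))); [apply is_derive_id |].
    apply resolvent_derive; [exact Hden | apply Gfun_derive, Hpole |].
    apply (@is_derive_const R_AbsRing R_NormedModule lam).
  - unfold minus, plus, opp, one, zero; simpl; ring.
Qed.

Lemma cont_of_deriv (f : R -> R) lo hi :
  (forall t, lo <= t <= hi -> ex_derive f t) -> cont_on lo hi f.
Proof.
  intros H t Ht. apply continuity_pt_filterlim.
  apply (@ex_derive_continuous R_AbsRing R_NormedModule); auto.
Qed.

Section ProbabilityFunctional.
Variables (lo hi : R) (I : (R -> R) -> R).
Hypothesis HI : prob_functional lo hi I.

Lemma cont_const c : cont_on lo hi (fun _ => c).
Proof. apply cont_of_deriv; intros; auto_derive; auto. Qed.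

Lemma I_lin2 f g al be : cont_on lo hi f -> cont_on lo hi g ->
  I (fun t => al * f t + be * g t) = al * I f + be * I g.
Proof.
  intros Hf Hg. destruct HI as [Hext [Hlin _]].
  assert (Hzero : I (fun _ => 0) = 0).
  { assert (H := Hlin (fun _ => 0) (fun _ => 0) 1 (cont_const 0) (cont_const 0)).
    cbv beta in H. rewrite (Hext (fun t => 0 + 1 * 0) (fun _ => 0)) in H by (intros; ring). lra. }
  assert (Hscal : forall h c, cont_on lo hi h -> I (fun t => c * h t) = c * I h).
  { intros h c Hh. rewrite (Hext _ (fun t => 0 + c * h t)) by (intros; ring).
    rewrite Hlin by (auto; apply cont_const). rewrite Hzero; ring. }
  rewrite Hlin, Hscal; auto.
  intros t Ht. apply continuity_pt_scal, Hf, Ht.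
Qed.
End ProbabilityFunctional.

(* A probability measure on [0, L] with L > 0 in its support has a positive
   first moment: compare s with a bump f supported near L. *)
Lemma first_moment_pos L I :
  0 < L -> prob_functional 0 L I -> in_support 0 L I L -> 0 < I (fun s => s).
Proof.
  intros HL HI Hend.
  destruct (Hend (L / 2)) as [f [Hfc [Hf0 [Hfz HfI]]]]; [lra|].
  destruct (continuity_ab_maj f 0 L) as [xM [HM HxM]]; [lra | exact Hfc |].
  assert (0 <= f xM) by (apply Hf0; auto).
  set (K := 2 * (f xM + 1) / L).
  assert (HK : 0 < K) by (unfold K; apply Rdiv_lt_0_compat; lra).
  assert (HK2 : K * (L / 2) = f xM + 1) by (unfold K; field; lra).
  assert (Hcmp : 0 <= I (fun s => K * s + (-1) * f s)).
  { apply HI.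
    - intros t Ht. apply continuity_pt_plus.
      + apply (cont_of_deriv (fun s => K * s) 0 L); [intros; auto_derive; auto | auto].
      + apply continuity_pt_scal, Hfc, Ht.
    - intros t Ht. destruct (Rle_lt_dec (L / 2) (Rabs (t - L))) as [Hfar | Hnear].
      + rewrite Hfz; auto; nra.
      + apply Rabs_def2 in Hnear. assert (f t <= f xM) by (apply HM; auto). nra. }
  rewrite (I_lin2 0 L I HI (fun s => s) f K (-1)) in Hcmp; [nra | | exact Hfc].
  apply cont_of_deriv; intros; auto_derive; auto.
Qed.

Lemma transform_increment L I lam h :
  0 <= L -> prob_functional 0 L I -> L < lam -> 0 < h <= 1 ->
  h * (I (fun s => s) / (lam + 1) ^ 2)
    <= I (fun s => s / (s - (lam + h))) - I (fun s => s / (s - lam)).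
Proof.
  intros HL HI Hl Hh.
  set (mu := lam + h). set (c := h / (lam + 1) ^ 2).
  assert (Hcont : forall x, L < x -> cont_on 0 L (fun s => s / (s - x))).
  { intros x Hx. apply cont_of_deriv; intros t Ht; auto_derive; lra. }
  assert (Hsq : 0 < (lam + 1) ^ 2) by (apply sq_pos; lra).
  assert (Hcmp : 0 <= I (fun s => 1 * (s / (s - mu)) + (-1) * (s / (s - lam) + c * s))).
  { apply HI.
    - apply cont_of_deriv; intros t Ht; auto_derive; unfold mu; repeat split; lra.
    - intros t Ht.
      replace (1 * (t / (t - mu)) + (-1) * (t / (t - lam) + c * t))
        with (t * h * ((lam + 1) ^ 2 - (mu - t) * (lam - t)) * / ((mu - t) * (lam - t) * (lam + 1) ^ 2))
        by (unfold c, mu; field; lra).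
      apply Rmult_le_pos; unfold mu.
      + apply Rmult_le_pos; nra.
      + apply Rlt_le, Rinv_0_lt_compat, Rmult_lt_0_compat; nra. }
  assert (Hid : cont_on 0 L (fun s => s)) by (apply cont_of_deriv; intros; auto_derive; auto).
  rewrite (I_lin2 0 L I HI (fun s => s / (s - mu)) (fun s => s / (s - lam) + c * s) 1 (-1)) in Hcmp;
    [| apply Hcont; unfold mu; lra |].
  - rewrite (proj1 HI (fun s => s / (s - lam) + c * s) (fun s => 1 * (s / (s - lam)) + c * s)) in Hcmp by (intros; ring).
    rewrite (I_lin2 0 L I HI (fun s => s / (s - lam)) (fun s => s) 1 c) in Hcmp; [| apply Hcont; lra | exact Hid].
    unfold c in Hcmp. replace (h * (I (fun s => s) / (lam + 1) ^ 2)) with (h / (lam + 1) ^ 2 * I (fun s => s))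
      by (field; lra). fold mu; lra.
  - apply cont_of_deriv; intros t Ht; auto_derive; lra.
Qed.

(* The master equations x = R(g, mu) and s(mu) = sum_i w_i / (a_i g - mu)
   combine into g x = int s / (s - mu) dmu(s), using
   s / (s - mu) = 1 + mu / (s - mu) and mu(1) = 1 = sum_i w_i. *)
Lemma master_identity L I p a om g x mu :
  prob_functional 0 L I -> L < mu -> rsum p om = 1 ->
  (forall i, (i < p)%nat -> a i * g <> mu) ->
  x = resolvent p a om g mu ->
  stieltjes I mu = rsum p (fun i => om i / (a i * g - mu)) ->
  g * x = I (fun s => s / (s - mu)).
Proof.
  intros HI Hmu Hom Hden Hx Hs. unfold stieltjes in Hs.
  rewrite (proj1 HI (fun s => s / (s - mu)) (fun s => 1 * 1 + mu * / (s - mu))) by (intros; field; lra).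
  rewrite (I_lin2 0 L I HI (fun _ => 1) (fun s => / (s - mu)) 1 mu).
  - rewrite (proj2 (proj2 (proj2 HI))), Rmult_1_l, Hs, <- Hom, Hx. unfold resolvent.
    rewrite <- !rsum_scal, <- rsum_plus. apply rsum_ext; intros i Hi.
    specialize (Hden i Hi). field; lra.
  - apply cont_const.
  - apply cont_of_deriv; intros t Ht; auto_derive; lra.
Qed.

Section AlongTheCurve.
Variables (gamma : R) (p : nat) (a om : nat -> R) (n : nat) (b pi : nat -> R)
  (I : (R -> R) -> R) (lamstar : R) (e : R -> R) (lam : R).
Hypothesis Hgamma : 0 < gamma.
Hypothesis Homsum : rsum p om = 1.
Hypothesis Hb : forall j, (j < n)%nat -> 0 < b j.
Hypothesis Hpi : forall j, (j < n)%nat -> 0 < pi j.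
Hypothesis Hpisum : rsum n pi = 1.
Hypothesis Hlamstar : 0 < lamstar.
Hypothesis Hmu : prob_functional 0 lamstar I.
Hypothesis Hend : in_support 0 lamstar I lamstar.
Hypothesis Hpole : forall t, lamstar < t ->
  forall j, (j < n)%nat -> e t <> - / (gamma * b j).
Hypothesis Hden : forall t, lamstar < t ->
  forall i, (i < p)%nat -> a i * Gfun gamma n b pi (e t) <> t.
Hypothesis Hs : forall t, lamstar < t ->
  stieltjes I t = rsum p (fun i => om i / (a i * Gfun gamma n b pi (e t) - t)).
Hypothesis HF : forall t, lamstar < t -> Ffun gamma p a om n b pi t (e t) = 0.
Hypothesis Hl : lamstar < lam.

Lemma denominators_G : forall j, (j < n)%nat -> 1 + gamma * b j * e lam <> 0.
Proof. intros j Hj. apply pole_free; auto. Qed.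

Lemma e_derive_implicit e1 : is_derive e lam e1 ->
  e1 * (1 + Gd gamma n b pi (e lam) * resolvent2 p a om (Gfun gamma n b pi (e lam)) lam)
    = resolvent1 p a om (Gfun gamma n b pi (e lam)) lam.
Proof.
  intros He.
  assert (He' : is_derive e lam
      (1 * resolvent1 p a om (Gfun gamma n b pi (e lam)) lam
       - e1 * Gd gamma n b pi (e lam) * resolvent2 p a om (Gfun gamma n b pi (e lam)) lam)).
  { apply (is_derive_ext_gt lamstar (fun t => resolvent p a om (Gfun gamma n b pi (e t)) t)); auto.
    - intros t Ht. specialize (HF t Ht). unfold Ffun in HF. unfold resolvent. lra.
    - eapply is_derive_eq.
      + apply (resolvent_derive p a om (fun t => Gfun gamma n b pi (e t)) (fun t => t));
          [apply Hden, Hl | | apply is_derive_id].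
        apply (is_derive_comp (Gfun gamma n b pi) e); [apply Gfun_derive, denominators_G | exact He].
      + reflexivity. }
  apply is_derive_unique in He, He'. rewrite He in He'. lra.
Qed.

Lemma e_derive_pos e1 : is_derive e lam e1 -> 0 < e1.
Proof.
  intros He.
  set (phi := fun t => I (fun s => s / (s - t))).
  set (P := Gd gamma n b pi (e lam) * e lam + Gfun gamma n b pi (e lam)).
  assert (HP : 0 < P).
  { apply Gd_mul_add_Gfun_pos; auto; [apply denominators_G | exact (rsum_one_nonempty n pi Hpisum)]. }
  assert (Hphi : is_derive phi lam (e1 * P)).
  { apply (is_derive_ext_gt lamstar (fun t => Gfun gamma n b pi (e t) * e t)); auto.
    - intros t Ht. apply (master_identity lamstar I p a om); auto.
      specialize (HF t Ht). unfold Ffun in HF. unfold resolvent. lra.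
    - apply Gfun_comp_mul_derive; [apply denominators_G | exact He]. }
  assert (Hk : 0 < I (fun s => s)) by (apply first_moment_pos with lamstar; auto).
  assert (Hslope : I (fun s => s) / (lam + 1) ^ 2 <= e1 * P).
  { apply (derive_ge_of_increments phi lam); auto.
    intros h Hh. apply transform_increment with lamstar; auto; lra. }
  assert (0 < I (fun s => s) / (lam + 1) ^ 2) by (apply Rdiv_lt_0_compat; [exact Hk | apply sq_pos; lra]).
  nra.
Qed.
End AlongTheCurve.

Theorem proposition3p11
  (gamma : R) (p : nat) (a om : nat -> R) (n : nat) (b pi : nat -> R)
  (I : (R -> R) -> R) (lamstar : R) (e : R -> R)
  (Hgamma : 0 < gamma)
  (Ha : forall i, (i < p)%nat -> 0 < a i)
  (Hom : forall i, (i < p)%nat -> 0 < om i)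
  (Homsum : rsum p om = 1)
  (Hb : forall j, (j < n)%nat -> 0 < b j)
  (Hpi : forall j, (j < n)%nat -> 0 < pi j)
  (Hpisum : rsum n pi = 1)
  (Hlamstar : 0 < lamstar)
  (Hmu : prob_functional 0 lamstar I)
  (Hend : in_support 0 lamstar I lamstar)
  (Hsmooth : smooth_on lamstar e)
  (Hpole : forall lam, lamstar < lam ->
     forall j, (j < n)%nat -> e lam <> - / (gamma * b j))
  (Hden : forall lam, lamstar < lam ->
     forall i, (i < p)%nat -> a i * Gfun gamma n b pi (e lam) <> lam)
  (Hs : forall lam, lamstar < lam ->
     stieltjes I lam =
       rsum p (fun i => om i / (a i * Gfun gamma n b pi (e lam) - lam)))
  (HF : forall lam, lamstar < lam -> Ffun gamma p a om n b pi lam (e lam) = 0) :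
  forall lam, lamstar < lam ->
    exists d, derivable_pt_lim (fun x => Ffun gamma p a om n b pi lam x) (e lam) d
              /\ 0 < d.
Proof.
  intros lam Hl.
  set (E := e lam).
  set (R2 := resolvent2 p a om (Gfun gamma n b pi E) lam).
  destruct (smooth_on_derivable lamstar e lam Hsmooth Hl) as [e1 He].
  assert (Himplicit : e1 * (1 + Gd gamma n b pi E * R2) = resolvent1 p a om (Gfun gamma n b pi E) lam).
  { apply (e_derive_implicit gamma p a om n b pi lamstar e lam); auto. }
  assert (He1 : 0 < e1).
  { apply (e_derive_pos gamma p a om n b pi I lamstar e lam); auto. }
  assert (HR1 : 0 < resolvent1 p a om (Gfun gamma n b pi E) lam).
  { apply resolvent1_pos; auto; [exact (rsum_one_nonempty p om Homsum) | apply Hden, Hl]. }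
  exists (1 + Gd gamma n b pi E * R2). split.
  - apply Ffun_derive_e; [apply (denominators_G gamma n b lamstar e lam) | apply Hden]; auto.
  - (* e'(lambda) (1 + G'(E) R2) = R1 with e'(lambda) > 0 and R1 > 0. *)
    nra.
Qed.
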